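(* Let $H$ be a complex infinite-dimensional separable Hilbert space and let $(f_n)_{n=1}^\infty$ be a frame for $H$ with optimal upper frame bound $1$ and analysis operator $U$, such that $e=e((f_n)_{n=1}^\infty)<\infty$ and $\dim\operatorname{Im}(I-U^*U)<\infty$. Let $(x_n)_{n=1}^k$ be any finite sequence in $H$ such that $x_1,\dots,x_k,f_1,f_2,\dots$ is a Parseval frame for $H$. Then $$\sum_{n=1}^k\|x_n\|^2=\sum_{n=1}^\infty(1-\|f_n\|^2)-e.$$
   Context: The analysis operator is $U:H\to\ell^2$, $Ux=(\langle x,f_n\rangle)_n$. The optimal upper frame bound is the infimum of all $B$ with $\sum_n|\langle x,f_n\rangle|^2\le B\|x\|^2$ for all $x$. The excess $e((f_n))$ of a frame is the maximal number of elements that can be deleted so that the remaining sequence is still a frame for $H$. A Parseval frame is a sequence $(h_n)$ with $\sum_n|\langle x,h_n\rangle|^2=\|x\|^2$ for all $x$. *)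

(* The Hilbert space H is modelled concretely as
   the complex sequence space l^2(N) (every complex infinite-dimensional
   separable Hilbert space is unitarily isomorphic to it).  A complex number is
   a pair (re, im) of reals. *)
From Stdlib Require Import Reals Lra List Classical ClassicalEpsilon.
Open Scope R_scope.

(* total value of a real series (0 if it does not converge) *)
Definition series_val (u : nat -> R) : R :=
  match excluded_middle_informative (exists l, infinite_sum u l) with
  | left H => proj1_sig (constructive_indefinite_description _ H)
  | right _ => 0
  end.

Fixpoint fsum (m : nat) (g : nat -> R) : R :=
  match m with O => 0 | S m' => fsum m' g + g m' end.

Definition vec := nat -> (R * R).

Definition cabs2 (z : R * R) : R := fst z ^ 2 + snd z ^ 2.

Definition l2 (x : vec) : Prop := exists l, infinite_sum (fun i => cabs2 (x i)) l.

Definition nrm2 (x : vec) : R := series_val (fun i => cabs2 (x i)).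

Definition ipr (x y : vec) : R :=
  series_val (fun i => fst (x i) * fst (y i) + snd (x i) * snd (y i)).
Definition ipi (x y : vec) : R :=
  series_val (fun i => snd (x i) * fst (y i) - fst (x i) * snd (y i)).
Definition ip (x y : vec) : R * R := (ipr x y, ipi x y).

(* subfamily (f_n)_{n | P n}: terms with P n = false are zeroed out *)
Definition coef2 (P : nat -> bool) (f : nat -> vec) (x : vec) (n : nat) : R :=
  if P n then cabs2 (ip x (f n)) else 0.

Definition frame_sub (P : nat -> bool) (f : nat -> vec) : Prop :=
  (forall n, l2 (f n)) /\
  exists A B, 0 < A /\
    forall x, l2 x -> exists s, infinite_sum (coef2 P f x) s /\
      A * nrm2 x <= s /\ s <= B * nrm2 x.

Definition is_frame (f : nat -> vec) : Prop := frame_sub (fun _ => true) f.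

Definition upper_frame_bound (f : nat -> vec) (B : R) : Prop :=
  forall x, l2 x -> exists s, infinite_sum (coef2 (fun _ => true) f x) s /\
    s <= B * nrm2 x.

Definition optimal_upper_bound (f : nat -> vec) (B : R) : Prop :=
  (forall B', upper_frame_bound f B' -> B <= B') /\
  (forall m, (forall B', upper_frame_bound f B' -> m <= B') -> m <= B).

Definition inlist (l : list nat) (n : nat) : bool := existsb (Nat.eqb n) l.

Definition excess (f : nat -> vec) (e : nat) : Prop :=
  (exists S : list nat, NoDup S /\ length S = e /\
     frame_sub (fun n => negb (inlist S n)) f) /\
  (forall D : nat -> bool, frame_sub (fun n => negb (D n)) f ->
     exists l : list nat, NoDup l /\ (length l <= e)%nat /\
       forall n, D n = true -> In n l).

(* U^*U x = sum_n <x,f_n> f_n, computed coordinatewise *)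
Definition frame_op (f : nat -> vec) (x : vec) : vec := fun i =>
  (series_val (fun n => ipr x (f n) * fst (f n i) - ipi x (f n) * snd (f n i)),
   series_val (fun n => ipr x (f n) * snd (f n i) + ipi x (f n) * fst (f n i))).

Definition lincomb (m : nat) (c : nat -> R * R) (v : nat -> vec) (i : nat) : R * R :=
  (fsum m (fun j => fst (c j) * fst (v j i) - snd (c j) * snd (v j i)),
   fsum m (fun j => fst (c j) * snd (v j i) + snd (c j) * fst (v j i))).

(* dim Im (I - U^*U) < infinity: the range lies in the span of finitely many vectors *)
Definition finite_rank_defect (f : nat -> vec) : Prop :=
  exists (m : nat) (v : nat -> vec), (forall j, l2 (v j)) /\
    forall x, l2 x -> exists c : nat -> R * R, forall i,
      (fst (x i) - fst (frame_op f x i), snd (x i) - snd (frame_op f x i))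
      = lincomb m c v i.

Definition prepend (k : nat) (xs : nat -> vec) (f : nat -> vec) (n : nat) : vec :=
  if Nat.ltb n k then xs n else f (n - k)%nat.

Definition parseval (g : nat -> vec) : Prop :=
  (forall n, l2 (g n)) /\
  forall y, l2 y -> infinite_sum (fun n => cabs2 (ip y (g n))) (nrm2 y).

(* Let g be the Parseval frame x_1, ..., x_k, f_1, f_2, ...  Splitting real and
   imaginary parts turns g into a real Parseval frame h (h_2n = g_n, h_2n+1 = i g_n)
   whose Gram matrix M is an orthogonal projection; Q := I - M is the complementary
   projection with columns q_a.  For a finite index set L, deleting the h_a, a in L,
   leaves a frame iff the columns q_a, a in L, are linearly independent.  If S
   realises the excess e of (f_n), the 2(k + e) indices L of x_1..x_k and of the f_n,
   n in S, thus give independent columns, and maximality of e forces every column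
   q_m into their span (columns come in pairs q_m, q_mate(m), exchanged by i).  So Q
   has rank 2(k + e) and trace Q = sum_m (1 - ||h_m||^2) = 2(k + e); halving and
   removing the k terms of the x_n gives the formula. *)
From Coquelicot Require Import Coquelicot.
From Stdlib Require Import Reals Lra Lia List Classical ClassicalEpsilon FunctionalExtensionality.
From mathcomp Require ssreflect ssrbool eqtype ssrnat fintype bigop ssralg matrix mxalgebra Rstruct.
Set Bullet Behavior "Strict Subproofs".
Import ListNotations.
Open Scope R_scope.

Module GramInverse.
Import ssreflect ssrbool eqtype ssrnat fintype bigop ssralg matrix mxalgebra Rstruct.
Import GRing.Theory.
Local Open Scope ring_scope.

Lemma fsum_big (s : nat) (u : nat -> R) : fsum s u = \sum_(k < s) u (nat_of_ord k).
Proof. elim: s => [|s IH]; first by rewrite big_ord0. by rewrite big_ord_recr /= IH. Qed.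

Definition nat_extend {s : nat} (v : 'I_s -> R) (j : nat) : R :=
  if insub j is Some i then v i else 0.

Lemma nat_extend_ord {s : nat} (v : 'I_s -> R) (i : 'I_s) : nat_extend v i = v i.
Proof. by rewrite /nat_extend valK. Qed.

Lemma exists_left_inverse (s : nat) (G : nat -> nat -> R) :
  (forall a : nat -> R, (forall i, (i < s)%coq_nat -> fsum s (fun j => a j * G j i) = 0) ->
     forall j, (j < s)%coq_nat -> a j = 0) ->
  exists H : nat -> nat -> R, forall i j, (i < s)%coq_nat -> (j < s)%coq_nat ->
    fsum s (fun k => H i k * G k j) = (if Nat.eqb i j then 1 else 0).
Proof.
move=> Ginj; pose Gmx : 'M[R]_s := \matrix_(i, j) G i j.
have Gfree : row_free Gmx.
  rewrite -kermx_eq0; apply/eqP/matrixP => r c; rewrite [RHS]mxE.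
  have := mulmx_ker Gmx; set K := kermx Gmx => /matrixP K0.
  rewrite -(nat_extend_ord (K r)).
  apply: (Ginj _ _ c (ltP (ltn_ord c))) => i /ltP lt_is.
  move: (K0 r (Ordinal lt_is)); rewrite !mxE fsum_big => ker0; rewrite -[RHS]ker0.
  by apply: eq_bigr => k _; rewrite nat_extend_ord [Gmx _ _]mxE.
have Gunit : Gmx \in unitmx by rewrite -row_free_unit.
exists (fun i => if insub i is Some i' then nat_extend (invmx Gmx i') else fun _ => 0).
move=> i j /ltP lt_is /ltP lt_js.
have := mulVmx Gunit; set Ginv := invmx Gmx => /matrixP /(_ (Ordinal lt_is) (Ordinal lt_js)).
rewrite [LHS]mxE [RHS]mxE (insubT (fun i => (i < s)%N) lt_is) fsum_big => inv_ij.
transitivity ((Ordinal lt_is == Ordinal lt_js :> 'I_s)%:R : R).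
  by rewrite -inv_ij; apply: eq_bigr => k _; rewrite nat_extend_ord [Gmx _ _]mxE.
case: (Nat.eqb_spec i j) => [eq_ij | ne_ij].
  by subst j; rewrite (bool_irrelevance lt_js lt_is) eqxx.
by case: eqP => // /(f_equal val).
Qed.
End GramInverse.

Lemma infinite_sum_ext (a b : nat -> R) l : (forall n, a n = b n) -> infinite_sum a l -> infinite_sum b l.
Proof. intros H. replace b with a; auto. apply functional_extensionality; auto. Qed.

Lemma infinite_sum_plus (a b : nat -> R) la lb : infinite_sum a la -> infinite_sum b lb ->
  infinite_sum (fun n => a n + b n) (la+lb).
Proof. rewrite <- !is_series_Reals. intros. apply (is_series_plus a b la lb); auto. Qed.

Lemma infinite_sum_scal (a : nat -> R) c la : infinite_sum a la -> infinite_sum (fun n => c * a n) (c*la).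
Proof. rewrite <- !is_series_Reals. intros. apply (is_series_scal c a la); auto. Qed.

Lemma infinite_sum_opp (a : nat -> R) la : infinite_sum a la -> infinite_sum (fun n => - a n) (- la).
Proof. intros H. apply (infinite_sum_ext (fun n => -1 * a n)). intros; ring.
  replace (-la) with (-1*la) by ring. apply infinite_sum_scal; auto. Qed.

Lemma infinite_sum_minus (a b : nat -> R) la lb : infinite_sum a la -> infinite_sum b lb ->
  infinite_sum (fun n => a n - b n) (la-lb).
Proof. intros. apply infinite_sum_plus; auto. apply infinite_sum_opp; auto. Qed.

Lemma infinite_sum_0 : infinite_sum (fun _ => 0) 0.
Proof. intros eps He. exists 0%nat. intros n _.
  assert (sum_f_R0 (fun _ => 0) n = 0) as -> by (induction n; simpl; auto; rewrite IHn; ring).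
  unfold Rdist. rewrite Rminus_diag, Rabs_R0. lra. Qed.

Lemma infinite_sum_fsum (s : nat) (u : nat -> nat -> R) (l : nat -> R) :
  (forall j, (j < s)%nat -> infinite_sum (u j) (l j)) ->
  infinite_sum (fun p => fsum s (fun j => u j p)) (fsum s l).
Proof. induction s; intros H; simpl.
  - apply infinite_sum_0.
  - apply infinite_sum_plus. apply IHs; intros; apply H; lia. apply H; lia. Qed.

Lemma infinite_sum_dirac (c : nat) (x : R) : infinite_sum (fun p => if Nat.eqb p c then x else 0) x.
Proof.
  assert (H : forall n, (n >= c)%nat -> sum_f_R0 (fun p => if Nat.eqb p c then x else 0) n = x).
  { assert (H0 : forall m, (m < c)%nat -> sum_f_R0 (fun p => if Nat.eqb p c then x else 0) m = 0).
    { intros m; induction m as [|m IH]; intros; cbn -[Nat.eqb].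
      - destruct (Nat.eqb 0 c) eqn:E; auto. apply Nat.eqb_eq in E; lia.
      - rewrite IH by lia. destruct (Nat.eqb (S m) c) eqn:E. apply Nat.eqb_eq in E; lia. ring. }
    intros n; induction n as [|n IH]; intros Hn.
    - cbn -[Nat.eqb]. replace c with 0%nat by lia. auto.
    - destruct (Nat.eq_dec (S n) c).
      + cbn -[Nat.eqb]. rewrite H0 by lia. subst. rewrite Nat.eqb_refl. ring.
      + cbn -[Nat.eqb]. rewrite IH by lia. destruct (Nat.eqb (S n) c) eqn:E. apply Nat.eqb_eq in E; lia. ring. }
  intros eps Heps. exists c. intros n Hn. rewrite H by auto. unfold Rdist. rewrite Rminus_diag, Rabs_R0. lra.
Qed.

Lemma infinite_sum_le (a b : nat -> R) la lb : (forall n, a n <= b n) ->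
  infinite_sum a la -> infinite_sum b lb -> la <= lb.
Proof. intros H Ha Hb.
  assert (X := is_lim_seq_le (sum_f_R0 a) (sum_f_R0 b) la lb).
  simpl in X. apply X. intros; apply sum_Rle; auto.
  apply is_lim_seq_Reals; auto. apply is_lim_seq_Reals; auto. Qed.

Lemma infinite_sum_ge0 (a : nat -> R) l : (forall n, 0 <= a n) -> infinite_sum a l -> 0 <= l.
Proof. intros. apply (infinite_sum_le (fun _ => 0) a); auto. apply infinite_sum_0. Qed.

Lemma infinite_sum_comparison (a b : nat -> R) lb : (forall n, 0 <= a n <= b n) -> infinite_sum b lb ->
  exists la, infinite_sum a la /\ la <= lb.
Proof. intros H Hb.
  assert (E : ex_series a).
  { apply (ex_series_le a b). intros n. unfold norm; simpl. unfold abs; simpl.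
    rewrite Rabs_pos_eq; apply H. exists lb. apply is_series_Reals; auto. }
  destruct E as [la Ha]. exists la. apply is_series_Reals in Ha. split; auto.
  apply (infinite_sum_le a b); auto. intros n; apply H. Qed.

Lemma infinite_sum_term_le (a : nat -> R) l m : (forall n, 0 <= a n) -> infinite_sum a l -> a m <= l.
Proof. intros Ha H.
  apply (infinite_sum_le (fun p => if Nat.eqb p m then a m else 0) a). intros n.
  destruct (Nat.eqb n m) eqn:E. apply Nat.eqb_eq in E; subst; lra. auto.
  apply infinite_sum_dirac. auto. Qed.

Lemma infinite_sum_eq0_terms (a : nat -> R) : (forall n, 0 <= a n) -> infinite_sum a 0 -> forall n, a n = 0.
Proof. intros Ha H n. pose proof (infinite_sum_term_le a 0 n Ha H). specialize (Ha n). lra. Qed.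

Lemma infinite_sum_prod_ex (x y : nat -> R) X Y : infinite_sum (fun p => x p ^ 2) X ->
  infinite_sum (fun p => y p ^ 2) Y -> exists P, infinite_sum (fun p => x p * y p) P.
Proof. intros HX HY.
  assert (E : ex_series (fun p => x p * y p)).
  { apply (@ex_series_le R_AbsRing R_CompleteNormedModule (fun p => x p * y p) (fun p => (x p ^2 + y p ^ 2) / 2)). intros n. unfold norm; simpl. unfold abs; simpl.
    rewrite Rabs_mult. pose proof (pow2_ge_0 (Rabs (x n) - Rabs (y n))).
    pose proof (pow2_abs (x n)); pose proof (pow2_abs (y n)). simpl in *. nra.
    exists ((X + Y)/2). apply is_series_Reals.
    apply (infinite_sum_ext (fun p => /2 * (x p ^ 2 + y p ^ 2))). intros; field.
    replace ((X+Y)/2) with (/2 * (X + Y)) by field. apply infinite_sum_scal. apply infinite_sum_plus; auto. }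
  destruct E as [P HP]. exists P. apply is_series_Reals; auto. Qed.

Lemma infinite_sum_Cauchy_Schwarz (x y : nat -> R) X Y P : infinite_sum (fun p => x p ^ 2) X ->
  infinite_sum (fun p => y p ^ 2) Y -> infinite_sum (fun p => x p * y p) P -> P ^ 2 <= X * Y.
Proof. intros HX HY HP.
  assert (Q : forall t, 0 <= X + 2 * t * P + t ^ 2 * Y).
  { intros t. apply (infinite_sum_ge0 (fun p => (x p + t * y p) ^ 2)). intros; apply pow2_ge_0.
    apply (infinite_sum_ext (fun p => (x p ^2 + (2 * t) * (x p * y p)) + t^2 * y p ^ 2)). intros; ring.
    apply infinite_sum_plus. apply infinite_sum_plus; auto. apply infinite_sum_scal; auto. apply infinite_sum_scal; auto. }
  assert (HY0 : 0 <= Y) by (apply (infinite_sum_ge0 _ _ (fun p => pow2_ge_0 (y p)) HY)).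
  assert (HX0 : 0 <= X) by (apply (infinite_sum_ge0 _ _ (fun p => pow2_ge_0 (x p)) HX)).
  destruct (Req_dec Y 0) as [Y0|Y0].
  - subst. destruct (Req_dec P 0). subst; nra.
    specialize (Q (- (X + 1) / (2 * P))).
    assert (X + 2 * (- (X + 1) / (2 * P)) * P + (- (X + 1) / (2 * P)) ^ 2 * 0 = -1) by (field; auto). lra.
  - specialize (Q (- P / Y)). assert (0 < Y) by lra.
    assert (X + 2 * (- P / Y) * P + (- P / Y) ^ 2 * Y = (X * Y - P^2) / Y) by (field; auto).
    rewrite H0 in Q. assert (0 <= X * Y - P ^ 2). { apply (Rmult_le_pos _ Y) in Q; [|lra].
    replace ((X * Y - P ^ 2) / Y * Y) with (X*Y - P^2) in Q by (field; auto). auto. } lra.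
Qed.

Lemma infinite_sum_tail1 (u : nat -> R) l : infinite_sum u l -> infinite_sum (fun n => u (S n)) (l - u 0%nat).
Proof. rewrite <- !is_series_Reals. intros H. apply (is_series_incr_1 u).
  unfold plus; simpl. replace (l - u 0%nat + u 0%nat) with l by ring. auto. Qed.

Lemma infinite_sum_untail1 (u : nat -> R) l : infinite_sum (fun n => u (S n)) l -> infinite_sum u (l + u 0%nat).
Proof. rewrite <- !is_series_Reals. intros H. apply (is_series_decr_1 u).
  unfold plus, opp; simpl. replace (l + u 0%nat + - u 0%nat) with l by ring. auto. Qed.

Lemma fsum_Sl (k : nat) (u : nat -> R) : fsum (S k) u = u 0%nat + fsum k (fun n => u (S n)).
Proof. induction k; simpl in *. ring. rewrite IHk. ring. Qed.

Lemma infinite_sum_tail (k : nat) : forall (u : nat -> R) l, infinite_sum u l ->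
  infinite_sum (fun n => u (n + k)%nat) (l - fsum k u).
Proof. induction k; intros u l H.
  - simpl. apply (infinite_sum_ext u). intros; f_equal; lia. replace (l - 0) with l by ring. auto.
  - apply infinite_sum_tail1 in H. apply IHk in H. rewrite fsum_Sl.
    apply (infinite_sum_ext (fun n => u (S (n + k)))). intros; f_equal; lia.
    replace (l - (u 0%nat + fsum k (fun n : nat => u (S n)))) with (l - u 0%nat - fsum k (fun n : nat => u (S n))) by ring. auto.
Qed.

Lemma infinite_sum_untail (k : nat) : forall (u : nat -> R) l, infinite_sum (fun n => u (n + k)%nat) l ->
  infinite_sum u (l + fsum k u).
Proof. induction k; intros u l H.
  - simpl. replace (l + 0) with l by ring. apply (infinite_sum_ext (fun n => u (n+0)%nat)). intros; f_equal; lia. auto.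
  - rewrite fsum_Sl.
    replace (l + (u 0%nat + fsum k (fun n : nat => u (S n)))) with (l + fsum k (fun n : nat => u (S n)) + u 0%nat) by ring.
    apply infinite_sum_untail1. apply IHk. apply (infinite_sum_ext (fun n => u (n + S k)%nat)). intros; f_equal; lia. auto.
Qed.

Lemma fsum_ext (k : nat) (u v : nat -> R) : (forall n, (n < k)%nat -> u n = v n) -> fsum k u = fsum k v.
Proof. induction k; intros H; simpl; auto. rewrite IHk by (intros; apply H; lia). rewrite H by lia. auto. Qed.

Lemma fsum_zero (k : nat) (u : nat -> R) : (forall n, (n < k)%nat -> u n = 0) -> fsum k u = 0.
Proof. intros H. rewrite (fsum_ext k u (fun _ => 0)) by auto. clear H. induction k; simpl; auto. rewrite IHk; ring. Qed.

Lemma fsum_S s (u : nat -> R) : fsum (S s) u = fsum s u + u s.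
Proof. reflexivity. Qed.

Lemma fsum_plus s (u v : nat -> R) : fsum s (fun j => u j + v j) = fsum s u + fsum s v.
Proof. induction s; simpl. ring. rewrite IHs. ring. Qed.
Lemma fsum_mult_l s c (u : nat -> R) : c * fsum s u = fsum s (fun j => c * u j).
Proof. induction s; simpl. ring. rewrite <- IHs. ring. Qed.
Lemma fsum_mult_r s c (u : nat -> R) : fsum s u * c = fsum s (fun j => u j * c).
Proof. induction s; simpl. ring. rewrite <- IHs. ring. Qed.
Lemma fsum_opp s (u : nat -> R) : - fsum s u = fsum s (fun j => - u j).
Proof. induction s; simpl. ring. rewrite <- IHs. ring. Qed.
Lemma fsum_swap s t (u : nat -> nat -> R) :
  fsum s (fun i => fsum t (fun j => u i j)) = fsum t (fun j => fsum s (fun i => u i j)).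
Proof. induction s; simpl. rewrite fsum_zero; auto. rewrite IHs. rewrite <- fsum_plus. auto. Qed.
Lemma fsum_delta s (z : nat -> R) l : (l < s)%nat -> fsum s (fun j => z j * (if Nat.eqb l j then 1 else 0)) = z l.
Proof. induction s; intros H. lia. simpl. destruct (Nat.eq_dec l s).
  - subst. rewrite fsum_zero. rewrite Nat.eqb_refl. ring. intros n Hn.
    destruct (Nat.eqb s n) eqn:E. apply Nat.eqb_eq in E; lia. ring.
  - rewrite IHs by lia. destruct (Nat.eqb l s) eqn:E. apply Nat.eqb_eq in E; lia. ring. Qed.
Lemma fsum_delta' s (z : nat -> R) l : (l < s)%nat -> fsum s (fun j => (if Nat.eqb j l then 1 else 0) * z j) = z l.
Proof. intros H. rewrite <- (fsum_delta s z l H). apply fsum_ext. intros n _.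
  rewrite Nat.eqb_sym. ring. Qed.
Lemma fsum_abs s (u : nat -> R) : Rabs (fsum s u) <= fsum s (fun j => Rabs (u j)).
Proof. induction s; simpl. rewrite Rabs_R0; lra. eapply Rle_trans. apply Rabs_triang. lra. Qed.
Lemma fsum_le s (u v : nat -> R) : (forall j, (j < s)%nat -> u j <= v j) -> fsum s u <= fsum s v.
Proof. induction s; intros H; simpl. lra. assert (u s <= v s) by (apply H; lia).
  assert (fsum s u <= fsum s v) by (apply IHs; intros; apply H; lia). lra. Qed.
Lemma fsum_ge0 s (u : nat -> R) : (forall j, (j < s)%nat -> 0 <= u j) -> 0 <= fsum s u.
Proof. intros H. replace 0 with (fsum s (fun _ => 0)). apply fsum_le; auto. apply fsum_zero; auto. Qed.
Lemma fsum_zero_terms s (u : nat -> R) : (forall j, (j < s)%nat -> 0 <= u j) -> fsum s u = 0 -> forall j, (j < s)%nat -> u j = 0.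
Proof. induction s; intros H E j Hj. lia. simpl in E.
  assert (0 <= fsum s u) by (apply fsum_ge0; intros; apply H; lia). assert (0 <= u s) by (apply H; lia).
  destruct (Nat.eq_dec j s). subst; lra. apply IHs. intros; apply H; lia. lra. lia. Qed.

Lemma infinite_sum_tail_zero_prefix (k : nat) (u : nat -> R) l : infinite_sum u l -> (forall n, (n < k)%nat -> u n = 0) ->
  infinite_sum (fun n => u (n + k)%nat) l.
Proof. intros H Z. apply infinite_sum_tail with (k := k) in H. rewrite fsum_zero in H by auto.
  replace (l - 0) with l in H by ring. auto. Qed.

Lemma infinite_sum_shift_right (k : nat) (u : nat -> R) l : infinite_sum u l ->
  infinite_sum (fun n => if Nat.ltb n k then 0 else u (n - k)%nat) l.
Proof. intros H. replace l with (l + fsum k (fun n => if Nat.ltb n k then 0 else u (n - k)%nat)).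
  apply infinite_sum_untail. apply (infinite_sum_ext u); auto. intros n.
  destruct (Nat.ltb (n + k) k) eqn:E. apply Nat.ltb_lt in E; lia. f_equal; lia.
  rewrite fsum_zero. ring. intros n Hn. apply Nat.ltb_lt in Hn. rewrite Hn. auto.
Qed.

Lemma sum_f_R0_pairs (a : nat -> R) K : sum_f_R0 (fun n => a (2 * n)%nat + a (S (2 * n))) K = sum_f_R0 a (S (2 * K)).
Proof. induction K.
  - simpl. auto.
  - rewrite tech5, IHK.
    replace (S (2 * S K)) with (S (S (S (2 * K)))) by lia.
    replace (2 * S K)%nat with (S (S (2 * K))) by lia. rewrite !tech5. ring. Qed.

Lemma infinite_sum_pairs (a : nat -> R) l : infinite_sum a l -> infinite_sum (fun n => a (2 * n)%nat + a (S (2 * n))) l.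
Proof. intros H eps He. destruct (H eps He) as [N HN]. exists N. intros n Hn.
  rewrite sum_f_R0_pairs. apply HN. lia. Qed.

Lemma sum_f_R0_mono (a : nat -> R) m n : (forall p, 0 <= a p) -> (m <= n)%nat -> sum_f_R0 a m <= sum_f_R0 a n.
Proof. intros Ha Hmn. induction Hmn. lra. simpl. specialize (Ha (S m0)). lra. Qed.

Lemma infinite_sum_unpair (a : nat -> R) l : (forall p, 0 <= a p) ->
  infinite_sum (fun n => a (2 * n)%nat + a (S (2 * n))) l -> infinite_sum a l.
Proof. intros Ha H.
  assert (Hle : forall K, sum_f_R0 a (S (2 * K)) <= l).
  { intros K. destruct (Rle_dec (sum_f_R0 a (S (2 * K))) l) as [|Hn]; auto.
    exfalso. destruct (H (sum_f_R0 a (S (2 * K)) - l)) as [N HN]. lra.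
    specialize (HN (max N K) (Nat.le_max_l _ _)). rewrite sum_f_R0_pairs in HN.
    assert (sum_f_R0 a (S (2 * K)) <= sum_f_R0 a (S (2 * max N K))).
    { apply sum_f_R0_mono; auto. lia. }
    unfold Rdist in HN. rewrite Rabs_pos_eq in HN; lra. }
  intros eps He. destruct (H eps He) as [N HN]. exists (S (2 * N)). intros n Hn.
  set (K := Nat.div2 (n - 1)).
  assert (HK1 : (S (2 * K) <= n)%nat). { pose proof (Nat.div2_odd (n-1)). destruct (Nat.odd (n - 1)); simpl in *; lia. }
  assert (HK2 : (n <= S (2 * S K))%nat). { pose proof (Nat.div2_odd (n-1)). destruct (Nat.odd (n - 1)); simpl in *; lia. }
  assert (HKN : (K >= N)%nat). { pose proof (Nat.div2_odd (n-1)). destruct (Nat.odd (n - 1)); simpl in *; lia. }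
  specialize (HN K HKN). rewrite sum_f_R0_pairs in HN.
  pose proof (sum_f_R0_mono a _ _ Ha HK1). pose proof (sum_f_R0_mono a _ _ Ha HK2). pose proof (Hle (S K)).
  unfold Rdist in *. apply Rabs_def2 in HN. apply Rabs_def1; lra.
Qed.

Lemma series_val_eq (u : nat -> R) l : infinite_sum u l -> series_val u = l.
Proof. intros H. unfold series_val. destruct (excluded_middle_informative _) as [E|E].
  - destruct (constructive_indefinite_description _ E) as [l' H']. simpl. eapply uniqueness_sum; eauto.
  - exfalso; apply E; eauto. Qed.

Definition vadd (x y : vec) : vec := fun i => (fst (x i) + fst (y i), snd (x i) + snd (y i)).
Definition vscal (c : R) (x : vec) : vec := fun i => (c * fst (x i), c * snd (x i)).
Definition vzero : vec := fun _ => (0, 0).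
Definition vmul_i (x : vec) : vec := fun i => (- snd (x i), fst (x i)).
Definition ipr_term (x y : vec) (i : nat) : R := fst (x i) * fst (y i) + snd (x i) * snd (y i).
Fixpoint vsum (s : nat) (F : nat -> vec) : vec :=
  match s with O => vzero | S s' => vadd (vsum s' F) (F s') end.

Lemma nrm2_sum x : l2 x -> infinite_sum (fun i => cabs2 (x i)) (nrm2 x).
Proof. intros [l H]. unfold nrm2. rewrite (series_val_eq _ l H). auto. Qed.

Lemma cabs2_ge0 z : 0 <= cabs2 z.
Proof. unfold cabs2. pose proof (pow2_ge_0 (fst z)). pose proof (pow2_ge_0 (snd z)). lra. Qed.


Lemma l2_fst x : l2 x -> exists l, infinite_sum (fun i => fst (x i) ^ 2) l.
Proof. intros H. destruct (infinite_sum_comparison (fun i => fst (x i) ^ 2) (fun i => cabs2 (x i)) (nrm2 x) ltac:(intros n; cbv beta; unfold cabs2;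
  split; [apply pow2_ge_0|]; pose proof (pow2_ge_0 (snd (x n))); pose proof (pow2_ge_0 (fst (x n))); nra) (nrm2_sum x H)) as [l [Hl _]].
  eauto. Qed.

Lemma l2_snd x : l2 x -> exists l, infinite_sum (fun i => snd (x i) ^ 2) l.
Proof. intros H. destruct (infinite_sum_comparison (fun i => snd (x i) ^ 2) (fun i => cabs2 (x i)) (nrm2 x) ltac:(intros n; cbv beta; unfold cabs2;
  split; [apply pow2_ge_0|]; pose proof (pow2_ge_0 (snd (x n))); pose proof (pow2_ge_0 (fst (x n))); nra) (nrm2_sum x H)) as [l [Hl _]].
  eauto. Qed.

Lemma ipr_term_summable x y : l2 x -> l2 y -> exists l, infinite_sum (ipr_term x y) l.
Proof. intros Hx Hy.
  destruct (l2_fst x Hx) as [a1 H1]. destruct (l2_snd x Hx) as [a2 H2].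
  destruct (l2_fst y Hy) as [b1 H3]. destruct (l2_snd y Hy) as [b2 H4].
  destruct (infinite_sum_prod_ex _ _ _ _ H1 H3) as [P1 HP1]. destruct (infinite_sum_prod_ex _ _ _ _ H2 H4) as [P2 HP2].
  exists (P1 + P2). apply infinite_sum_plus; auto. Qed.

Lemma ipr_sum x y : l2 x -> l2 y -> infinite_sum (ipr_term x y) (ipr x y).
Proof. intros Hx Hy. destruct (ipr_term_summable x y Hx Hy) as [l H]. unfold ipr.
  replace (fun i => fst (x i) * fst (y i) + snd (x i) * snd (y i)) with (ipr_term x y) by reflexivity.
  rewrite (series_val_eq _ l H). auto. Qed.

Lemma ipr_sym x y : ipr x y = ipr y x.
Proof. unfold ipr. f_equal. apply functional_extensionality; intros; ring. Qed.

Lemma nrm2_ipr x : nrm2 x = ipr x x.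
Proof. unfold nrm2, ipr. f_equal. apply functional_extensionality; intros; unfold cabs2; ring. Qed.

Lemma ipi_ipr_i x y : ipi x y = ipr x (vmul_i y).
Proof. unfold ipi, ipr, vmul_i. f_equal. apply functional_extensionality; intros; simpl; ring. Qed.

Lemma l2_add x y : l2 x -> l2 y -> l2 (vadd x y).
Proof. intros Hx Hy.
  destruct (infinite_sum_comparison (fun i => cabs2 (vadd x y i)) (fun i => 2 * cabs2 (x i) + 2 * cabs2 (y i)) (2 * nrm2 x + 2 * nrm2 y)) as [l [Hl _]].
  - intros n; split. apply cabs2_ge0. unfold cabs2, vadd; simpl.
    pose proof (pow2_ge_0 (fst (x n) - fst (y n))). pose proof (pow2_ge_0 (snd (x n) - snd (y n))). nra.
  - apply infinite_sum_plus; apply infinite_sum_scal; apply nrm2_sum; auto.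
  - exists l; auto. Qed.

Lemma l2_scal c x : l2 x -> l2 (vscal c x).
Proof. intros Hx. exists (c^2 * nrm2 x). apply (infinite_sum_ext (fun i => c^2 * cabs2 (x i))).
  intros; unfold cabs2, vscal; simpl; ring. apply infinite_sum_scal. apply nrm2_sum; auto. Qed.

Lemma l2_mul_i x : l2 x -> l2 (vmul_i x).
Proof. intros Hx. exists (nrm2 x). apply (infinite_sum_ext (fun i => cabs2 (x i))).
  intros; unfold cabs2, vmul_i; simpl; ring. apply nrm2_sum; auto. Qed.

Lemma l2_zero : l2 vzero.
Proof. exists 0. apply (infinite_sum_ext (fun _ => 0)). intros; unfold cabs2, vzero; simpl; ring. apply infinite_sum_0. Qed.

Lemma l2_vsum s F : (forall j, (j < s)%nat -> l2 (F j)) -> l2 (vsum s F).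
Proof. induction s; intros H; simpl. apply l2_zero. apply l2_add. apply IHs; intros; apply H; lia. apply H; lia. Qed.

Lemma ipr_add_l x y z : l2 x -> l2 y -> l2 z -> ipr (vadd x y) z = ipr x z + ipr y z.
Proof. intros Hx Hy Hz. apply series_val_eq.
  apply (infinite_sum_ext (fun i => ipr_term x z i + ipr_term y z i)). intros; unfold ipr_term, vadd; simpl; ring.
  apply infinite_sum_plus; apply ipr_sum; auto. Qed.

Lemma ipr_scal_l c x z : l2 x -> l2 z -> ipr (vscal c x) z = c * ipr x z.
Proof. intros Hx Hz. apply series_val_eq.
  apply (infinite_sum_ext (fun i => c * ipr_term x z i)). intros; unfold ipr_term, vscal; simpl; ring.
  apply infinite_sum_scal; apply ipr_sum; auto. Qed.

Lemma ipr_zero_l z : ipr vzero z = 0.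
Proof. apply series_val_eq. apply (infinite_sum_ext (fun _ => 0)). intros; unfold vzero; simpl; ring. apply infinite_sum_0. Qed.

Lemma ipr_vsum_l s F z : (forall j, (j < s)%nat -> l2 (F j)) -> l2 z ->
  ipr (vsum s F) z = fsum s (fun j => ipr (F j) z).
Proof. induction s; intros H Hz; simpl. apply ipr_zero_l.
  assert (H1 : forall j, (j < s)%nat -> l2 (F j)) by (intros; apply H; lia).
  assert (H2 : l2 (F s)) by (apply H; lia).
  rewrite ipr_add_l; auto. rewrite IHs; auto. apply l2_vsum; auto. Qed.

Lemma ipr_i_i x y : ipr (vmul_i x) (vmul_i y) = ipr x y.
Proof. unfold ipr, vmul_i. f_equal. apply functional_extensionality; intros; simpl; ring. Qed.

Lemma ipr_i_l x y : l2 x -> l2 y -> ipr (vmul_i x) y = - ipr x (vmul_i y).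
Proof. intros Hx Hy. apply series_val_eq.
  apply (infinite_sum_ext (fun i => - ipr_term x (vmul_i y) i)). intros; unfold ipr_term, vmul_i; simpl; ring.
  apply infinite_sum_opp. apply ipr_sum; auto. apply l2_mul_i; auto. Qed.

Lemma cabs2_ip y g : cabs2 (ip y g) = ipr y g ^ 2 + ipr y (vmul_i g) ^ 2.
Proof. unfold cabs2, ip; simpl. rewrite ipi_ipr_i. auto. Qed.

(* The complex Parseval frame (g_n) becomes the real Parseval frame
   g_0, i g_0, g_1, i g_1, ... for the real inner product [ipr] = Re <.,.>. *)
Definition realify (g : nat -> vec) (m : nat) : vec :=
  if Nat.odd m then vmul_i (g (Nat.div2 m)) else g (Nat.div2 m).

Lemma realify_even g n : realify g (2 * n) = g n.
Proof. unfold realify. rewrite Nat.odd_mul, Nat.div2_double. reflexivity. Qed.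

Lemma realify_odd g n : realify g (S (2 * n)) = vmul_i (g n).
Proof. unfold realify. rewrite Nat.odd_succ, Nat.even_mul, Nat.div2_succ_double. reflexivity. Qed.

Lemma realify_l2 g : (forall n, l2 (g n)) -> forall m, l2 (realify g m).
Proof. intros H m. unfold realify. destruct (Nat.odd m). apply l2_mul_i; auto. auto. Qed.

Lemma realify_parseval g : (forall n, l2 (g n)) ->
  (forall y, l2 y -> infinite_sum (fun n => cabs2 (ip y (g n))) (nrm2 y)) ->
  forall y, l2 y -> infinite_sum (fun m => ipr y (realify g m) ^ 2) (nrm2 y).
Proof. intros Hl Hp y Hy. apply infinite_sum_unpair. intros; apply pow2_ge_0.
  apply (infinite_sum_ext (fun n => cabs2 (ip y (g n)))). intros n. rewrite realify_even, realify_odd. apply cabs2_ip.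
  auto. Qed.

Lemma parseval_polarization (h : nat -> vec) : (forall m, l2 (h m)) ->
  (forall y, l2 y -> infinite_sum (fun m => ipr y (h m) ^ 2) (nrm2 y)) ->
  forall y z, l2 y -> l2 z -> infinite_sum (fun m => ipr y (h m) * ipr z (h m)) (ipr y z).
Proof. intros Hl Hp y z Hy Hz.
  pose proof (Hp _ (l2_add y z Hy Hz)) as H1.
  assert (E1 : forall m, ipr (vadd y z) (h m) = ipr y (h m) + ipr z (h m)) by (intros; apply ipr_add_l; auto).
  assert (E2 : nrm2 (vadd y z) = nrm2 y + 2 * ipr y z + nrm2 z).
  { rewrite !nrm2_ipr. rewrite ipr_add_l; auto. rewrite (ipr_sym y (vadd y z)), (ipr_sym z (vadd y z)).
    rewrite !ipr_add_l; auto. rewrite (ipr_sym z y). ring. apply l2_add; auto. }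
  rewrite E2 in H1.
  pose proof (infinite_sum_minus _ _ _ _ (infinite_sum_minus _ _ _ _ H1 (Hp y Hy)) (Hp z Hz)) as H2.
  replace (ipr y z) with (/2 * (nrm2 y + 2 * ipr y z + nrm2 z - nrm2 y - nrm2 z)) by field.
  apply (infinite_sum_ext (fun m => /2 * (ipr (vadd y z) (h m) ^ 2 - ipr y (h m) ^ 2 - ipr z (h m) ^ 2))).
  intros m. rewrite E1. field. apply infinite_sum_scal. auto. Qed.

(* [M] is the Gram matrix of a real Parseval frame, i.e. the matrix of an orthogonal
   projection of l^2(N); [qcol a] is the a-th column of I - M, and [gram L] is the
   Gram matrix of the columns indexed by [L]. *)
Section ProjectionKernel.
Variable M : nat -> nat -> R.
Hypothesis Msym : forall a b, M a b = M b a.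
Hypothesis M_idem : forall a b, infinite_sum (fun p => M a p * M b p) (M a b).

Definition qcol (a p : nat) : R := (if Nat.eqb a p then 1 else 0) - M a p.
Definition idx (L : list nat) (j : nat) : nat := nth j L 0%nat.
Definition gram (L : list nat) (j i : nat) : R := qcol (idx L j) (idx L i).
Definition gram_injective (L : list nat) : Prop := forall a : nat -> R,
  (forall i, (i < length L)%nat -> fsum (length L) (fun j => a j * gram L j i) = 0) ->
  forall j, (j < length L)%nat -> a j = 0.
Definition in_qspan (L : list nat) (w : nat -> R) : Prop :=
  exists c : nat -> R, forall p, w p = fsum (length L) (fun j => c j * qcol (idx L j) p).

Lemma qcol_sym a b : qcol a b = qcol b a.
Proof. unfold qcol. rewrite Nat.eqb_sym, Msym. auto. Qed.

Lemma qcol_gram a b : infinite_sum (fun p => qcol a p * qcol b p) (qcol a b).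
Proof.
  apply (infinite_sum_ext (fun p => ((if Nat.eqb p b then (if Nat.eqb a b then 1 else 0) else 0)
     - (if Nat.eqb p a then M b a else 0)) - (if Nat.eqb p b then M a b else 0) + M a p * M b p)).
  { intros p. unfold qcol.
    destruct (Nat.eqb_spec p a); destruct (Nat.eqb_spec p b); destruct (Nat.eqb_spec a b);
    destruct (Nat.eqb_spec a p); destruct (Nat.eqb_spec b p); subst; try lia; try ring. }
  replace (qcol a b) with ((if Nat.eqb a b then 1 else 0) - M b a - M a b + M a b).
  apply infinite_sum_plus; auto. apply infinite_sum_minus. apply infinite_sum_minus. apply infinite_sum_dirac. apply infinite_sum_dirac. apply infinite_sum_dirac.
  unfold qcol. rewrite Msym. ring.
Qed.

Lemma M_diag_bounds a : 0 <= M a a <= 1.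
Proof. pose proof (M_idem a a) as H.
  assert (0 <= M a a) by (apply (infinite_sum_ge0 _ _ (fun p => Rle_0_sqr (M a p)) H)).
  pose proof (infinite_sum_term_le _ _ a (fun p => Rle_0_sqr (M a p)) H). cbv beta in *. split; auto. destruct (Rle_dec (M a a) 1) as [|n]; auto. exfalso. assert (0 < M a a * (M a a - 1)) by (apply Rmult_lt_0_compat; lra). unfold Rsqr in H1. nra. Qed.

Lemma fsum_square (s : nat) (a : nat -> R) (F : nat -> nat) (p : nat) :
  fsum s (fun j => a j * qcol (F j) p) * fsum s (fun j => a j * qcol (F j) p) =
  fsum s (fun i => a i * fsum s (fun j => a j * (qcol (F j) p * qcol (F i) p))).
Proof. rewrite fsum_mult_r. apply fsum_ext. intros i _.
  rewrite Rmult_assoc. f_equal. rewrite Rmult_comm, fsum_mult_r. apply fsum_ext. intros; ring. Qed.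

Lemma qcomb_norm2 (L : list nat) (a : nat -> R) :
  infinite_sum (fun p => fsum (length L) (fun j => a j * qcol (idx L j) p) ^ 2)
    (fsum (length L) (fun i => a i * fsum (length L) (fun j => a j * gram L j i))).
Proof. apply (infinite_sum_ext (fun p => fsum (length L) (fun i => a i * fsum (length L) (fun j => a j * (qcol (idx L j) p * qcol (idx L i) p))))).
  intros p. rewrite <- fsum_square. ring.
  apply infinite_sum_fsum. intros i _. apply infinite_sum_scal. apply infinite_sum_fsum. intros j _. apply infinite_sum_scal. apply qcol_gram. Qed.

Lemma idx_app_l L m j : (j < length L)%nat -> idx (L ++ m) j = idx L j.
Proof. intros. unfold idx. apply app_nth1; auto. Qed.
Lemma idx_app_r L m : idx (L ++ [m]) (length L) = m.
Proof. unfold idx. rewrite app_nth2 by lia. rewrite Nat.sub_diag. auto. Qed.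

Lemma gram_injective_snoc (L : list nat) (m : nat) : gram_injective L -> ~ in_qspan L (qcol m) -> gram_injective (L ++ [m]).
Proof. intros Hinj Hns a Ha.
  rewrite length_app in *. simpl in *. replace (length L + 1)%nat with (S (length L)) in * by lia.
  set (s := length L) in *.
  assert (Hw := qcomb_norm2 (L ++ [m]) a). rewrite length_app in Hw. simpl in Hw.
  replace (length L + 1)%nat with (S s) in Hw by (unfold s; lia).
  rewrite fsum_zero in Hw. 2:{ intros i Hi. rewrite Ha by lia. ring. }
  assert (W0 : forall p, fsum (S s) (fun j => a j * qcol (idx (L ++ [m]) j) p) = 0).
  { intros p. pose proof (infinite_sum_eq0_terms _ (fun p => pow2_ge_0 _) Hw p). cbv beta in H. destruct (Req_dec (fsum (S s) (fun j => a j * qcol (idx (L ++ [m]) j) p)) 0) as [|Hn]; auto. exfalso; exact (pow_nonzero _ 2 Hn H). }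
  assert (Hs : a s = 0).
  { destruct (Req_dec (a s) 0); auto. exfalso. apply Hns.
    exists (fun j => - a j / a s). intros p. specialize (W0 p). rewrite fsum_S in W0.
    unfold s in W0 at 2. rewrite idx_app_r in W0. fold s in W0.
    rewrite (fsum_ext _ _ (fun j => a j * qcol (idx L j) p)) in W0.
    2:{ intros j Hj. rewrite idx_app_l; auto. }
    transitivity (- fsum s (fun j => a j * qcol (idx L j) p) / a s).
    { replace (qcol m p) with ((a s * qcol m p) / a s) by (field; auto).
      replace (a s * qcol m p) with (- fsum s (fun j => a j * qcol (idx L j) p)) by lra. auto. }
    unfold Rdiv. rewrite Rmult_comm, fsum_opp, fsum_mult_l. apply fsum_ext. intros; field; auto. }
  assert (HL : forall j, (j < s)%nat -> a j = 0).
  { apply Hinj. intros i Hi. specialize (Ha i ltac:(lia)). rewrite fsum_S, Hs in Ha.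
    rewrite <- Ha. unfold gram. rewrite Rmult_0_l, Rplus_0_r. apply fsum_ext. intros j Hj.
    rewrite !idx_app_l; auto. }
  intros j Hj. destruct (Nat.eq_dec j s). subst; auto. apply HL; lia.
Qed.

Lemma in_qspan_ext L w w' : (forall p, w p = w' p) -> in_qspan L w -> in_qspan L w'.
Proof. intros E [c Hc]. exists c. intros; rewrite <- E; auto. Qed.
Lemma in_qspan_qcol L j : (j < length L)%nat -> in_qspan L (qcol (idx L j)).
Proof. intros Hj. exists (fun i => if Nat.eqb i j then 1 else 0). intros p.
  rewrite (fsum_delta' (length L) (fun i => qcol (idx L i) p) j Hj). auto. Qed.
Lemma in_qspan_add L w w' : in_qspan L w -> in_qspan L w' -> in_qspan L (fun p => w p + w' p).
Proof. intros [c Hc] [c' Hc']. exists (fun j => c j + c' j). intros p. rewrite Hc, Hc', <- fsum_plus.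
  apply fsum_ext; intros; ring. Qed.
Lemma in_qspan_scal L t w : in_qspan L w -> in_qspan L (fun p => t * w p).
Proof. intros [c Hc]. exists (fun j => t * c j). intros p. rewrite Hc, fsum_mult_l.
  apply fsum_ext; intros; ring. Qed.
Lemma in_qspan_0 L : in_qspan L (fun _ => 0).
Proof. exists (fun _ => 0). intros p. rewrite fsum_zero; auto. intros; ring. Qed.
Lemma in_qspan_fsum L t (u : nat -> nat -> R) : (forall j, (j < t)%nat -> in_qspan L (u j)) ->
  in_qspan L (fun p => fsum t (fun j => u j p)).
Proof. induction t; intros H; simpl. apply in_qspan_0. apply in_qspan_add. apply IHt; intros; apply H; lia. apply H; lia. Qed.

(* Multiplication by i maps h_2n to h_2n+1 and h_2n+1 to - h_2n; [imul] is its action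
   on coefficient sequences and [mate] pairs the indices 2n and 2n+1.  The two
   hypotheses below say that M commutes with it. *)
Definition imul (w : nat -> R) (p : nat) : R := if Nat.odd p then w (pred p) else - w (S p).
Definition mate (m : nat) : nat := if Nat.odd m then pred m else S m.
Definition sgn (m : nat) : R := if Nat.odd m then -1 else 1.

Hypothesis M_i_l : forall n r, M (S (2 * n)) (2 * r) = - M (2 * n) (S (2 * r)).
Hypothesis M_i_i : forall n r, M (S (2 * n)) (S (2 * r)) = M (2 * n) (2 * r).

Lemma odd_cases (p : nat) : (exists r, p = 2 * r /\ Nat.odd p = false)%nat \/ (exists r, p = S (2 * r) /\ Nat.odd p = true)%nat.
Proof. pose proof (Nat.div2_odd p). destruct (Nat.odd p) eqn:E; simpl in H.
  right. exists (Nat.div2 p). split; auto; lia. left. exists (Nat.div2 p). split; auto; lia. Qed.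

Lemma imul_qcol_even n p : imul (qcol (2 * n)) p = qcol (S (2 * n)) p.
Proof. unfold imul, qcol. destruct (odd_cases p) as [[r [-> E]]|[r [-> E]]]; rewrite E.
  - rewrite M_i_l. destruct (Nat.eqb (2 * n) (S (2 * r))) eqn:E1. apply Nat.eqb_eq in E1; lia.
    destruct (Nat.eqb (S (2 * n)) (2 * r)) eqn:E2. apply Nat.eqb_eq in E2; lia. ring.
  - replace (pred (S (2 * r))) with (2 * r)%nat by reflexivity. rewrite M_i_i. replace (Nat.eqb (S (2 * n)) (S (2 * r))) with (Nat.eqb (2 * n) (2 * r)) by reflexivity. ring.
Qed.

Lemma imul_imul w p : imul (imul w) p = - w p.
Proof. unfold imul. destruct (odd_cases p) as [[r [-> E]]|[r [-> E]]]; rewrite E.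
  - rewrite Nat.odd_succ, Nat.even_mul. simpl. ring.
  - replace (pred (S (2 * r))) with (2 * r)%nat by reflexivity. rewrite Nat.odd_mul. simpl. auto. Qed.

Lemma imul_ext w w' : (forall p, w p = w' p) -> forall p, imul w p = imul w' p.
Proof. intros E p. unfold imul. rewrite !E. auto. Qed.

Lemma imul_qcol m p : imul (qcol m) p = sgn m * qcol (mate m) p.
Proof. unfold sgn, mate. destruct (odd_cases m) as [[r [-> E]]|[r [-> E]]]; rewrite E.
  - rewrite imul_qcol_even. ring.
  - replace (pred (S (2 * r))) with (2 * r)%nat by reflexivity. rewrite <- (imul_ext _ _ (imul_qcol_even r) p). rewrite imul_imul. ring. Qed.

Lemma imul_fsum t (c : nat -> R) (u : nat -> nat -> R) p :
  imul (fun p => fsum t (fun j => c j * u j p)) p = fsum t (fun j => c j * imul (u j) p).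
Proof. unfold imul. destruct (Nat.odd p). auto. rewrite fsum_opp. apply fsum_ext; intros; ring. Qed.

Definition mate_closed (L : list nat) : Prop := forall j, (j < length L)%nat -> exists j', (j' < length L)%nat /\ idx L j' = mate (idx L j).

Lemma in_qspan_imul_qcol L j : mate_closed L -> (j < length L)%nat -> in_qspan L (imul (qcol (idx L j))).
Proof. intros Hp Hj. destruct (Hp j Hj) as [j' [Hj' E]].
  apply (in_qspan_ext L (fun p => sgn (idx L j) * qcol (idx L j') p)).
  intros p. rewrite imul_qcol, E. auto. apply in_qspan_scal, in_qspan_qcol; auto. Qed.

Lemma in_qspan_imul L w : mate_closed L -> in_qspan L w -> in_qspan L (imul w).
Proof. intros Hp [c Hc].
  apply (in_qspan_ext L (fun p => fsum (length L) (fun j => c j * imul (qcol (idx L j)) p))).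
  - intros p. rewrite (imul_ext _ _ Hc). rewrite imul_fsum. auto.
  - apply in_qspan_fsum. intros j Hj. apply in_qspan_scal. apply in_qspan_imul_qcol; auto. Qed.

Lemma mate_mate m : mate (mate m) = m.
Proof. unfold mate. destruct (odd_cases m) as [[r [-> E]]|[r [-> E]]]; rewrite E.
  rewrite Nat.odd_succ, Nat.even_mul. simpl. auto. replace (pred (S (2 * r))) with (2 * r)%nat by reflexivity. rewrite Nat.odd_mul. simpl. auto. Qed.

Lemma sgn_mate m : sgn (mate m) = - sgn m.
Proof. unfold sgn, mate. destruct (odd_cases m) as [[r [-> E]]|[r [-> E]]]; rewrite E.
  rewrite Nat.odd_succ, Nat.even_mul. simpl. ring. replace (pred (S (2 * r))) with (2 * r)%nat by reflexivity. rewrite Nat.odd_mul. simpl. ring. Qed.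


Lemma gram_injective_app_mates (L : list nat) (m : nat) : gram_injective L -> mate_closed L -> ~ in_qspan L (qcol m) ->
  gram_injective (L ++ [m; mate m]).
Proof.
  (* If q_mate(m) = v + c q_m with v in the span, applying i yields
     (1 + c^2) q_m in the span. *)
  intros Hinj Hp Hns.
  replace (L ++ [m; mate m]) with ((L ++ [m]) ++ [mate m]) by (rewrite <- app_assoc; auto).
  apply gram_injective_snoc. apply gram_injective_snoc; auto.
  intros [c Hc]. apply Hns. rewrite length_app in Hc. simpl in Hc.
  replace (length L + 1)%nat with (S (length L)) in Hc by lia.
  set (s := length L) in *.
  set (v := fun p => fsum s (fun j => c j * qcol (idx L j) p)).
  assert (Hv : in_qspan L v) by (exists c; intros; auto).
  assert (E1 : forall p, qcol (mate m) p = v p + c s * qcol m p).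
  { intros p. rewrite Hc, fsum_S. unfold s at 2. rewrite idx_app_r. f_equal. apply fsum_ext. intros j Hj.
    rewrite idx_app_l; auto. }
  assert (E2 : forall p, sgn (mate m) * qcol m p = imul v p + c s * (sgn m * qcol (mate m) p)).
  { intros p. assert (H : imul (qcol (mate m)) p = sgn (mate m) * qcol m p) by (rewrite imul_qcol, mate_mate; auto).
    rewrite <- H. rewrite (imul_ext _ _ E1). rewrite <- imul_qcol.
    unfold imul. destruct (Nat.odd p); ring. }
  rewrite sgn_mate in E2.
  assert (Hne : - sgn m * (1 + c s * c s) <> 0).
  { intro H. apply Rmult_integral in H. destruct H. unfold sgn in H; destruct (Nat.odd m); lra. nra. }
  eapply in_qspan_ext. 2:{ apply in_qspan_scal with (t := / (- sgn m * (1 + c s * c s))).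
    apply in_qspan_add. apply in_qspan_imul; eauto. apply in_qspan_scal with (t := c s * sgn m). exact Hv. }
  intros p. simpl. field_simplify_eq; auto.
  specialize (E2 p). rewrite E1 in E2.
  transitivity (- sgn m * qcol m p - c s * c s * (sgn m * qcol m p)). 2: ring.
  rewrite E2. ring. split. pose proof (pow2_ge_0 (c s)). simpl in *. lra. unfold sgn; destruct (Nat.odd m); lra.
Qed.


Lemma inlist_split (L : list nat) (u : nat -> R) p : NoDup L ->
  (if inlist L p then u p else 0) = fsum (length L) (fun j => if Nat.eqb p (idx L j) then u (idx L j) else 0).
Proof. induction L as [|a L IH]; intros Hd. simpl; auto.
  inversion Hd; subst. change (length (a :: L)) with (S (length L)). rewrite fsum_Sl. unfold idx at 1. simpl nth.
  rewrite (fsum_ext _ _ (fun j => if Nat.eqb p (idx L j) then u (idx L j) else 0)) by (intros; reflexivity).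
  rewrite <- IH by auto. unfold inlist in *. simpl.
  destruct (Nat.eqb_spec p a).
  - subst. change (idx (a :: L) 0) with a. destruct (existsb (Nat.eqb a) L) eqn:E; [|simpl; ring].
    exfalso. apply existsb_exists in E. destruct E as [x [Hx E]]. apply Nat.eqb_eq in E. subst; auto.
  - simpl. ring.
Qed.

Lemma infinite_sum_on (L : list nat) (u : nat -> R) : NoDup L ->
  infinite_sum (fun p => if inlist L p then u p else 0) (fsum (length L) (fun j => u (idx L j))).
Proof. intros Hd. apply (infinite_sum_ext (fun p => fsum (length L) (fun j => if Nat.eqb p (idx L j) then u (idx L j) else 0))).
  intros; rewrite inlist_split; auto. apply infinite_sum_fsum. intros; apply infinite_sum_dirac. Qed.

Lemma infinite_sum_off (L : list nat) (u : nat -> R) U : NoDup L -> infinite_sum u U ->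
  infinite_sum (fun p => if inlist L p then 0 else u p) (U - fsum (length L) (fun j => u (idx L j))).
Proof. intros Hd HU. apply (infinite_sum_ext (fun p => u p - (if inlist L p then u p else 0))).
  intros p; destruct (inlist L p); ring. apply infinite_sum_minus; auto. apply infinite_sum_on; auto. Qed.

Lemma idx_inj L i j : NoDup L -> (i < length L)%nat -> (j < length L)%nat -> idx L i = idx L j -> i = j.
Proof. intros Hd Hi Hj E. apply (proj1 (NoDup_nth L 0%nat) Hd); auto. Qed.

Lemma gram_nodup L j i : NoDup L -> (i < length L)%nat -> (j < length L)%nat ->
  gram L j i = (if Nat.eqb i j then 1 else 0) - M (idx L j) (idx L i).
Proof. intros Hd Hi Hj. unfold gram, qcol. f_equal. destruct (Nat.eqb_spec (idx L j) (idx L i)) as [E|E].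
  - apply idx_inj in E; auto. subst. rewrite Nat.eqb_refl; auto.
  - destruct (Nat.eqb_spec i j); auto. subst; tauto. Qed.


Lemma fsum_one s : fsum s (fun _ => 1) = INR s.
Proof. induction s; simpl fsum. simpl; auto. rewrite IHs, S_INR. auto. Qed.

Lemma left_inverse_gram_apply L (H : nat -> nat -> R) (z : nat -> R) l :
  (forall i j, (i < length L)%nat -> (j < length L)%nat -> fsum (length L) (fun k => H i k * gram L k j) = (if Nat.eqb i j then 1 else 0)) ->
  (l < length L)%nat ->
  fsum (length L) (fun i => H l i * fsum (length L) (fun j => gram L i j * z j)) = z l.
Proof. intros HH Hl.
  rewrite (fsum_ext _ _ (fun i => fsum (length L) (fun j => H l i * gram L i j * z j))).
  2:{ intros; rewrite fsum_mult_l; apply fsum_ext; intros; ring. }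
  rewrite fsum_swap. rewrite <- (fsum_delta (length L) z l Hl). apply fsum_ext. intros j Hj.
  rewrite <- HH by auto. rewrite fsum_mult_l. apply fsum_ext; intros; ring. Qed.

(* If every column lies in the span, Q(m,m) = sum_(i,j) (G^-1)_(j,i) q_(L_i)(m) q_(L_j)(m),
   and summing over m gives tr (G^-1 G) = |L|. *)
Lemma sum_compl_diag (L : list nat) : gram_injective L -> (forall m, in_qspan L (qcol m)) ->
  infinite_sum (fun m => 1 - M m m) (INR (length L)).
Proof. intros Hinj Hsp. destruct (GramInverse.exists_left_inverse (length L) (gram L) Hinj) as [H HH].
  set (s := length L) in *.
  apply (infinite_sum_ext (fun m => fsum s (fun j => fsum s (fun i => H j i * (qcol (idx L i) m * qcol (idx L j) m))))).
  - intros m. destruct (Hsp m) as [c Hc]. fold s in Hc.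
    assert (Hcl : forall l, (l < s)%nat -> fsum s (fun i => H l i * qcol (idx L i) m) = c l).
    { intros l Hl. rewrite <- (left_inverse_gram_apply L H c l HH Hl). apply fsum_ext. intros i Hi. f_equal.
      rewrite qcol_sym, Hc. apply fsum_ext. intros j Hj. unfold gram. rewrite (qcol_sym (idx L i)). ring. }
    replace (1 - M m m) with (qcol m m) by (unfold qcol; rewrite Nat.eqb_refl; auto).
    rewrite Hc. apply fsum_ext. intros j Hj. rewrite <- Hcl by auto. rewrite fsum_mult_r.
    apply fsum_ext; intros; ring.
  - rewrite <- fsum_one. apply infinite_sum_fsum. intros j Hj.
    replace 1 with (fsum s (fun i => H j i * gram L i j)) by (rewrite HH, Nat.eqb_refl; auto).
    apply infinite_sum_fsum. intros i Hi. apply infinite_sum_scal. apply qcol_gram.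
Qed.

Lemma off_ge0 L (u : nat -> R) : (forall p, 0 <= u p) -> forall p, 0 <= (if inlist L p then 0 else u p).
Proof. intros H p. destruct (inlist L p). lra. auto. Qed.

Lemma off_sq_le L (u w : nat -> R) : (forall p, u p ^ 2 <= w p) ->
  forall p, 0 <= (if inlist L p then 0 else u p) ^ 2 <= w p.
Proof. intros H p. split. apply pow2_ge_0. destruct (inlist L p). pose proof (H p). pose proof (pow2_ge_0 (u p)).
  simpl; lra. auto. Qed.

(* Since v = v M, (G v|_L)_i = sum_(p not in L) v_p M(p, L_i); then Cauchy-Schwarz,
   with sum_p M(p, L_i)^2 = M(L_i, L_i) <= 1. *)
Lemma gram_row_sq_le_off (L : list nat) (v : nat -> R) O i : NoDup L ->
  (forall r, infinite_sum (fun p => v p * M p r) (v r)) ->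
  infinite_sum (fun p => if inlist L p then 0 else v p ^ 2) O ->
  (i < length L)%nat ->
  fsum (length L) (fun j => gram L i j * v (idx L j)) ^ 2 <= O.
Proof.
  intros Hd HV HO Hi.
  assert (O0 : 0 <= O) by (apply (infinite_sum_ge0 _ _ (off_ge0 L _ (fun p => pow2_ge_0 (v p))) HO)).
  pose proof (infinite_sum_off L (fun p => v p * M p (idx L i)) _ Hd (HV (idx L i))) as Hb.
  set (B := v (idx L i) - fsum (length L) (fun j => v (idx L j) * M (idx L j) (idx L i))) in Hb.
  assert (EB : B = fsum (length L) (fun j => gram L i j * v (idx L j))).
  { unfold B. symmetry.
    rewrite (fsum_ext _ (fun j => gram L i j * v (idx L j))
      (fun j => (if Nat.eqb j i then 1 else 0) * v (idx L j) + - (v (idx L j) * M (idx L j) (idx L i)))).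
    - rewrite fsum_plus, <- fsum_opp, fsum_delta' by auto. ring.
    - intros j Hj. rewrite gram_nodup by auto. rewrite (Msym (idx L i)). ring. }
  rewrite <- EB.
  destruct (infinite_sum_comparison (fun p => (if inlist L p then 0 else M p (idx L i)) ^ 2)
    (fun p => M (idx L i) p * M (idx L i) p) _
    (off_sq_le L (fun p => M p (idx L i)) (fun p => M (idx L i) p * M (idx L i) p)
      (fun p => ltac:(cbv beta; rewrite (Msym p); simpl; lra)))
    (M_idem (idx L i) (idx L i))) as [Y [HY HYle]].
  assert (Y0 : 0 <= Y) by (apply (infinite_sum_ge0 _ _ (fun p => pow2_ge_0 _) HY)).
  pose proof (M_diag_bounds (idx L i)).
  assert (B ^ 2 <= O * Y).
  { apply (infinite_sum_Cauchy_Schwarz (fun p => if inlist L p then 0 else v p)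
      (fun p => if inlist L p then 0 else M p (idx L i))); auto.
    - apply (infinite_sum_ext (fun p => if inlist L p then 0 else v p ^ 2)); auto.
      intros p; destruct (inlist L p); ring.
    - apply (infinite_sum_ext (fun p => if inlist L p then 0 else v p * M p (idx L i))); auto.
      intros p; destruct (inlist L p); ring. }
  assert (O * Y <= O * 1) by (apply Rmult_le_compat_l; lra). lra.
Qed.

(* The values of v on L are recovered from the rows (G v|_L)_i through a left
   inverse of G, so they are controlled by the mass of v off L. *)
Lemma deleted_lower_bound (L : list nat) : NoDup L -> gram_injective L ->
  exists A, 0 < A /\ forall (v : nat -> R) S O,
    (forall r, infinite_sum (fun p => v p * M p r) (v r)) ->
    infinite_sum (fun p => v p ^ 2) S ->
    infinite_sum (fun p => if inlist L p then 0 else v p ^ 2) O -> A * S <= O.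
Proof.
  intros Hd Hinj. destruct (GramInverse.exists_left_inverse (length L) (gram L) Hinj) as [H HH].
  set (s := length L) in *.
  set (C := fsum s (fun l => fsum s (fun i => Rabs (H l i)) ^ 2)).
  assert (HC : 0 <= C) by (apply fsum_ge0; intros; apply pow2_ge_0).
  exists (/ (C + 1)). split; [apply Rinv_0_lt_compat; lra|].
  intros v S O HV HS HO.
  assert (O0 : 0 <= O) by (apply (infinite_sum_ge0 _ _ (off_ge0 L _ (fun p => pow2_ge_0 (v p))) HO)).
  set (z := fun j => v (idx L j)).
  assert (HZ : forall l, (l < s)%nat -> z l ^ 2 <= fsum s (fun i => Rabs (H l i)) ^ 2 * O).
  { intros l Hl. rewrite <- (left_inverse_gram_apply L H z l HH Hl). fold s.
    set (T := fsum s (fun i => H l i * fsum s (fun j => gram L i j * z j))).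
    assert (HT : Rabs T <= fsum s (fun i => Rabs (H l i)) * sqrt O).
    { eapply Rle_trans; [apply fsum_abs|]. rewrite fsum_mult_r. apply fsum_le. intros i Hi.
      rewrite Rabs_mult. apply Rmult_le_compat_l; [apply Rabs_pos|].
      rewrite <- sqrt_Rsqr_abs. apply sqrt_le_1_alt. rewrite Rsqr_pow2.
      apply (gram_row_sq_le_off L v O i); auto. }
    assert (0 <= fsum s (fun i => Rabs (H l i))) by (apply fsum_ge0; intros; apply Rabs_pos).
    rewrite <- (pow2_abs T).
    replace (fsum s (fun i => Rabs (H l i)) ^ 2 * O) with ((fsum s (fun i => Rabs (H l i)) * sqrt O) ^ 2)
      by (rewrite Rpow_mult_distr, pow2_sqrt; auto).
    apply pow_incr. split; auto. apply Rabs_pos. }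
  assert (HSz : fsum s (fun l => z l ^ 2) <= C * O) by (unfold C; rewrite fsum_mult_r; apply fsum_le; auto).
  pose proof (infinite_sum_off L (fun p => v p ^ 2) S Hd HS) as HO'.
  pose proof (uniqueness_sum _ _ _ HO HO') as EO. fold s in EO.
  assert (S <= (C + 1) * O).
  { replace S with (O + fsum s (fun j => v (idx L j) ^ 2)) by lra. unfold z in HSz. lra. }
  apply (Rmult_le_reg_l (C + 1)); [lra|]. rewrite <- Rmult_assoc, Rinv_r by lra. lra.
Qed.

Lemma gram_injective_of_lower_bound (L : list nat) (A : R) : NoDup L -> 0 < A ->
  (forall a : nat -> R, exists (v : nat -> R) S O,
     (forall p, v p = fsum (length L) (fun j => a j * M (idx L j) p)) /\
     infinite_sum (fun p => v p ^ 2) S /\ S = fsum (length L) (fun j => a j * v (idx L j)) /\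
     infinite_sum (fun p => if inlist L p then 0 else v p ^ 2) O /\ A * S <= O) ->
  gram_injective L.
Proof. intros Hd HA Hreal a Ha. destruct (Hreal a) as [v [S [O [Hv [HS [ES [HO HAS]]]]]]].
  set (s := length L) in *.
  assert (Hvi : forall i, (i < s)%nat -> v (idx L i) = a i).
  { intros i Hi. specialize (Ha i Hi). rewrite Hv.
    rewrite (fsum_ext _ _ (fun j => a j * (if Nat.eqb i j then 1 else 0) + - (a j * M (idx L j) (idx L i)))) in Ha.
    rewrite fsum_plus, <- fsum_opp, fsum_delta in Ha by auto. lra.
    intros j Hj. rewrite gram_nodup by auto. rewrite Nat.eqb_sym. ring. }
  assert (ES' : S = fsum s (fun j => a j ^ 2)).
  { rewrite ES. apply fsum_ext. intros j Hj. rewrite Hvi; auto. ring. }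
  pose proof (infinite_sum_off L _ _ Hd HS) as HO'. pose proof (uniqueness_sum _ _ _ HO HO') as EO.
  rewrite (fsum_ext _ _ (fun j => a j ^ 2)) in EO by (intros; rewrite Hvi; auto).
  fold s in EO. assert (O = 0) by lra. subst O.
  assert (S0 : S = 0).
  { assert (0 <= S) by (rewrite ES'; apply fsum_ge0; intros; apply pow2_ge_0).
    nra. }
  intros j Hj. assert (Haj : a j ^ 2 = 0).
  { apply (fsum_zero_terms s (fun j => a j ^ 2)); auto. intros; apply pow2_ge_0. lra. }
  destruct (Req_dec (a j) 0) as [|Hn]; auto. exfalso. apply (pow_nonzero _ 2 Hn). auto.
Qed.
End ProjectionKernel.

Definition pairs (l : list nat) : list nat := flat_map (fun n => [2 * n; S (2 * n)]%nat) l.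

Lemma div2_cases x : x = (2 * Nat.div2 x)%nat \/ x = S (2 * Nat.div2 x).
Proof. pose proof (Nat.div2_odd x). destruct (Nat.odd x); simpl in H; lia. Qed.

Lemma In_pairs l x : In x (pairs l) <-> In (Nat.div2 x) l.
Proof. unfold pairs. rewrite in_flat_map. split.
  - intros [n [Hn Hx]]. cbn [In] in Hx. destruct Hx as [<-|[<-|[]]].
    rewrite Nat.div2_double; auto. rewrite Nat.div2_succ_double; auto.
  - intros H. exists (Nat.div2 x). split; auto. cbn [In]. destruct (div2_cases x); auto. Qed.

Lemma NoDup_pairs l : NoDup l -> NoDup (pairs l).
Proof. induction l as [|a l IH]; intros Hd. constructor.
  inversion Hd; subst. change (pairs (a :: l)) with ((2 * a)%nat :: S (2 * a) :: pairs l). constructor.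
  - intros [E|E]. lia. apply In_pairs in E. rewrite Nat.div2_double in E. auto.
  - constructor. intros E. apply In_pairs in E. rewrite Nat.div2_succ_double in E. auto.
    apply IH; auto. Qed.

Lemma length_pairs l : length (pairs l) = (2 * length l)%nat.
Proof. induction l; auto. change (length (pairs (a :: l))) with (S (S (length (pairs l)))). rewrite IHl. simpl. lia. Qed.

Lemma inlist_In L x : inlist L x = true <-> In x L.
Proof. unfold inlist. rewrite existsb_exists. split.
  - intros [y [Hy E]]. apply Nat.eqb_eq in E. subst; auto.
  - intros H. exists x. split; auto. apply Nat.eqb_refl. Qed.

Lemma inlist_false L x : inlist L x = false <-> ~ In x L.
Proof. rewrite <- inlist_In. destruct (inlist L x); split; auto; congruence. Qed.

Lemma div2_mate m : Nat.div2 (mate m) = Nat.div2 m.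
Proof. unfold mate. pose proof (Nat.div2_odd m) as E. destruct (Nat.odd m); simpl Nat.b2n in E.
  - replace (pred m) with (2 * Nat.div2 m)%nat by lia. apply Nat.div2_double.
  - replace (S m) with (S (2 * Nat.div2 m)) by lia. apply Nat.div2_succ_double. Qed.

Lemma mate_neq m : mate m <> m.
Proof. unfold mate. pose proof (Nat.div2_odd m) as E. destruct (Nat.odd m); simpl Nat.b2n in E; lia. Qed.

Lemma mate_closed_pairs l : mate_closed (pairs l).
Proof. intros j Hj. assert (Hin : In (idx (pairs l) j) (pairs l)) by (apply nth_In; auto).
  assert (Hm : In (mate (idx (pairs l) j)) (pairs l)) by (apply In_pairs; rewrite div2_mate; apply In_pairs; auto).
  destruct (In_nth _ _ 0%nat Hm) as [j' [Hj' E]]. exists j'. auto. Qed.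

Lemma NoDup_pairs_app_mates l m : NoDup l -> ~ In m (pairs l) -> NoDup (pairs l ++ [m; mate m]).
Proof.
  intros Hd Hnin. apply NoDup_app; [apply NoDup_pairs; auto| |].
  - constructor; [intros [H|[]]; apply (mate_neq m); auto|]. constructor; auto. constructor.
  - intros a Ha [<-|[<-|[]]]; auto. apply Hnin, In_pairs. apply In_pairs in Ha. rewrite div2_mate in Ha. auto.
Qed.

Definition deleted_indices (k : nat) (SL : list nat) : list nat := seq 0 k ++ map (fun n => (n + k)%nat) SL.

Lemma In_deleted_indices k SL n : In n (deleted_indices k SL) <-> (n < k)%nat \/ ((k <= n)%nat /\ In (n - k)%nat SL).
Proof. unfold deleted_indices. rewrite in_app_iff, in_seq, in_map_iff. split.
  - intros [H|[x [<- Hx]]]. left; lia. right. replace (x + k - k)%nat with x by lia. split; auto; lia.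
  - intros [H|[H1 H2]]. left; lia. right. exists (n - k)%nat. split; auto; lia. Qed.

Lemma NoDup_deleted_indices k SL : NoDup SL -> NoDup (deleted_indices k SL).
Proof. intros Hd. unfold deleted_indices. apply NoDup_app. apply seq_NoDup.
  apply NoDup_map_NoDup_ForallPairs; auto. intros x y _ _ E; lia.
  intros a Ha Hb. apply in_seq in Ha. apply in_map_iff in Hb. destruct Hb as [x [<- _]]. lia. Qed.

Lemma prepend_hi k xs f n : prepend k xs f (n + k) = f n.
Proof. unfold prepend. destruct (Nat.ltb_spec (n + k) k). lia. f_equal. lia. Qed.
Lemma prepend_lo k xs f n : (n < k)%nat -> prepend k xs f n = xs n.
Proof. intros H. unfold prepend. destruct (Nat.ltb_spec n k). auto. lia. Qed.

Lemma inlist_app A B x : inlist (A ++ B) x = (inlist A x || inlist B x)%bool.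
Proof. unfold inlist. apply existsb_app. Qed.

Lemma inlist_pairs l x : inlist (pairs l) x = inlist l (Nat.div2 x).
Proof. apply Bool.eq_true_iff_eq. rewrite !inlist_In. apply In_pairs. Qed.

Lemma inlist_deleted_indices k SL n : inlist (deleted_indices k SL) n = (Nat.ltb n k || inlist SL (n - k))%bool.
Proof. apply Bool.eq_true_iff_eq. rewrite inlist_In, In_deleted_indices, Bool.orb_true_iff, Nat.ltb_lt, inlist_In.
  split; intros [H|H]; auto. destruct H; auto. destruct (Nat.lt_ge_cases n k); auto. Qed.

Lemma inlist_mates m x : inlist [m; mate m] x = Nat.eqb (Nat.div2 x) (Nat.div2 m).
Proof. apply Bool.eq_true_iff_eq. rewrite inlist_In, Nat.eqb_eq. simpl. split.
  - intros [<-|[<-|[]]]; auto. rewrite div2_mate; auto.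
  - intros E. unfold mate. pose proof (Nat.div2_odd m) as Em. pose proof (Nat.div2_odd x) as Ex.
    destruct (Nat.odd m); destruct (Nat.odd x); simpl Nat.b2n in *; lia. Qed.

Lemma off_le L (u : nat -> R) : (forall p, 0 <= u p) -> forall p, 0 <= (if inlist L p then 0 else u p) <= u p.
Proof. intros H p. destruct (inlist L p); split; auto; lra. Qed.

Section ParsevalGram.
Variable g : nat -> vec.
Hypothesis g_l2 : forall n, l2 (g n).
Hypothesis g_parseval : forall y, l2 y -> infinite_sum (fun n => cabs2 (ip y (g n))) (nrm2 y).

Definition rfam := realify g.
Definition rgram (p r : nat) : R := ipr (rfam p) (rfam r).

Lemma rfam_l2 m : l2 (rfam m).
Proof. apply realify_l2; auto. Qed.

Lemma rfam_parseval y : l2 y -> infinite_sum (fun m => ipr y (rfam m) ^ 2) (nrm2 y).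
Proof. apply realify_parseval; auto. Qed.

Lemma rfam_polarization y z : l2 y -> l2 z -> infinite_sum (fun m => ipr y (rfam m) * ipr z (rfam m)) (ipr y z).
Proof. apply parseval_polarization. apply rfam_l2. apply rfam_parseval. Qed.

Lemma rgram_sym a b : rgram a b = rgram b a.
Proof. apply ipr_sym. Qed.

Lemma rgram_idempotent a b : infinite_sum (fun p => rgram a p * rgram b p) (rgram a b).
Proof. apply rfam_polarization; apply rfam_l2. Qed.

Lemma rgram_i_l n r : rgram (S (2 * n)) (2 * r) = - rgram (2 * n) (S (2 * r)).
Proof. unfold rgram, rfam. rewrite !realify_even, !realify_odd. apply ipr_i_l; auto. Qed.

Lemma rgram_i_i n r : rgram (S (2 * n)) (S (2 * r)) = rgram (2 * n) (2 * r).
Proof. unfold rgram, rfam. rewrite !realify_even, !realify_odd. apply ipr_i_i. Qed.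

Lemma rgram_reproducing y : l2 y -> forall r, infinite_sum (fun p => ipr y (rfam p) * rgram p r) (ipr y (rfam r)).
Proof. intros Hy r. apply (infinite_sum_ext (fun p => ipr y (rfam p) * ipr (rfam r) (rfam p))).
  intros p. unfold rgram. rewrite (ipr_sym (rfam r)). auto. apply rfam_polarization; auto. apply rfam_l2. Qed.

Lemma cabs2_ip_rfam y n : cabs2 (ip y (g n)) = ipr y (rfam (2 * n)) ^ 2 + ipr y (rfam (S (2 * n))) ^ 2.
Proof. unfold rfam. rewrite realify_even, realify_odd. apply cabs2_ip. Qed.

Lemma gram_injective_of_deleted_frame (L : list nat) (A : R) : NoDup L -> 0 < A ->
  (forall y, l2 y -> exists O, infinite_sum (fun m => if inlist L m then 0 else ipr y (rfam m) ^ 2) O /\ A * nrm2 y <= O) ->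
  gram_injective rgram L.
Proof. intros Hd HA Hb. apply (gram_injective_of_lower_bound rgram L A Hd HA). intros a.
  set (s := length L).
  set (y := vsum s (fun j => vscal (a j) (rfam (idx L j)))).
  assert (Hy : l2 y) by (apply l2_vsum; intros; apply l2_scal, rfam_l2).
  assert (Hv : forall z, l2 z -> ipr y z = fsum s (fun j => a j * ipr (rfam (idx L j)) z)).
  { intros z Hz. unfold y. rewrite ipr_vsum_l; auto. apply fsum_ext. intros j Hj. apply ipr_scal_l; auto. apply rfam_l2.
    intros; apply l2_scal, rfam_l2. }
  destruct (Hb y Hy) as [O [HO HAO]].
  exists (fun p => ipr y (rfam p)), (nrm2 y), O. split; [|split; [|split; [|split]]]; auto.
  - intros p. apply Hv, rfam_l2.
  - apply rfam_parseval; auto.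
  - rewrite nrm2_ipr, Hv by auto. apply fsum_ext. intros j Hj. rewrite ipr_sym. auto.
Qed.


Lemma rgram_diag_even n : rgram (2 * n) (2 * n) = nrm2 (g n).
Proof. unfold rgram, rfam. rewrite realify_even, nrm2_ipr. reflexivity. Qed.

Lemma rgram_diag_odd n : rgram (S (2 * n)) (S (2 * n)) = nrm2 (g n).
Proof. unfold rgram, rfam. rewrite realify_odd, ipr_i_i, nrm2_ipr. reflexivity. Qed.

Variables (f : nat -> vec) (k : nat).
Hypothesis g_tail : forall n, g (n + k) = f n.

(* [F] consists of the two real indices 2n, 2n+1 of every g_n with n < k and of
   every g_(n+k) = f_n with [D n]. *)
Definition deletion_set (F : list nat) (D : nat -> bool) : Prop :=
  forall p, inlist F p = (Nat.ltb (Nat.div2 p) k || D (Nat.div2 p - k)%nat)%bool.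

Lemma deleted_coef_sum F D y O : deletion_set F D ->
  infinite_sum (fun p => if inlist F p then 0 else ipr y (rfam p) ^ 2) O <->
  infinite_sum (coef2 (fun n => negb (D n)) f y) O.
Proof.
  intros HF. split; intros H.
  - apply infinite_sum_pairs, infinite_sum_tail_zero_prefix with (k := k) in H.
    + eapply infinite_sum_ext; [|exact H]. intros n. cbv beta.
      rewrite !HF, Nat.div2_double, Nat.div2_succ_double.
      replace (Nat.ltb (n + k) k) with false by (symmetry; apply Nat.ltb_ge; lia).
      replace (n + k - k)%nat with n by lia.
      unfold coef2. rewrite <- g_tail, cabs2_ip_rfam. destruct (D n); simpl; ring.
    + intros n Hn. cbv beta. rewrite !HF, Nat.div2_double, Nat.div2_succ_double.
      replace (Nat.ltb n k) with true by (symmetry; apply Nat.ltb_lt; auto). simpl. ring.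
  - apply infinite_sum_unpair; [apply off_ge0; intros; apply pow2_ge_0|].
    apply (infinite_sum_ext (fun n => if Nat.ltb n k then 0 else coef2 (fun n => negb (D n)) f y (n - k)));
      [|apply infinite_sum_shift_right; auto].
    intros n. rewrite !HF, Nat.div2_double, Nat.div2_succ_double.
    destruct (Nat.ltb_spec n k); [simpl; ring|].
    unfold coef2. replace (f (n - k)%nat) with (g n) by (rewrite <- g_tail; f_equal; lia).
    rewrite cabs2_ip_rfam. destruct (D (n - k)%nat); simpl; ring.
Qed.

Lemma gram_injective_of_frame_sub F D : NoDup F -> deletion_set F D ->
  frame_sub (fun n => negb (D n)) f -> gram_injective rgram F.
Proof.
  intros Hd HF [_ [A [B [HA HAB]]]]. apply (gram_injective_of_deleted_frame F A Hd HA).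
  intros y Hy. destruct (HAB y Hy) as [s [Hs [Hlo _]]].
  exists s. split; auto. apply (deleted_coef_sum F D); auto.
Qed.

Lemma frame_sub_of_gram_injective F D : NoDup F -> deletion_set F D ->
  gram_injective rgram F -> frame_sub (fun n => negb (D n)) f.
Proof.
  intros Hd HF Hinj. split; [intros n; rewrite <- g_tail; apply g_l2|].
  destruct (deleted_lower_bound rgram rgram_sym rgram_idempotent F Hd Hinj) as [A [HA Hlb]].
  exists A, 1. split; auto. intros y Hy.
  destruct (infinite_sum_comparison (fun p => if inlist F p then 0 else ipr y (rfam p) ^ 2) _ _
    (off_le F _ (fun p => pow2_ge_0 _)) (rfam_parseval y Hy)) as [O [HO HOle]].
  exists O. split; [|split].
  - apply (deleted_coef_sum F D); auto.
  - apply (Hlb (fun p => ipr y (rfam p))); auto. apply rgram_reproducing; auto. apply rfam_parseval; auto.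
  - lra.
Qed.

Lemma deletion_set_excess SL : deletion_set (pairs (deleted_indices k SL)) (inlist SL).
Proof. intros p. rewrite inlist_pairs, inlist_deleted_indices. reflexivity. Qed.

Lemma deletion_set_app_mates F D m : deletion_set F D -> (k <= Nat.div2 m)%nat ->
  deletion_set (F ++ [m; mate m]) (fun n => D n || Nat.eqb n (Nat.div2 m - k)%nat)%bool.
Proof.
  intros HF Hm p. rewrite inlist_app, HF, inlist_mates.
  destruct (Nat.ltb_spec (Nat.div2 p) k); [reflexivity|]. simpl. f_equal.
  destruct (Nat.eqb_spec (Nat.div2 p) (Nat.div2 m)), (Nat.eqb_spec (Nat.div2 p - k)%nat (Nat.div2 m - k)%nat);
    auto; lia.
Qed.

Lemma in_qspan_of_excess (SL : list nat) (e : nat) : NoDup SL -> length SL = e ->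
  frame_sub (fun n => negb (inlist SL n)) f ->
  (forall D : nat -> bool, frame_sub (fun n => negb (D n)) f ->
     exists l : list nat, NoDup l /\ (length l <= e)%nat /\ forall n, D n = true -> In n l) ->
  forall m, in_qspan rgram (pairs (deleted_indices k SL)) (qcol rgram m).
Proof.
  intros HSnd HSlen HSfr Hmax m. set (E := pairs (deleted_indices k SL)).
  assert (HEnd : NoDup E) by (apply NoDup_pairs, NoDup_deleted_indices; auto).
  assert (Hinj := gram_injective_of_frame_sub E _ HEnd (deletion_set_excess SL) HSfr).
  destruct (In_dec Nat.eq_dec m E) as [Hin|Hnin].
  { destruct (In_nth E m 0%nat Hin) as [j [Hj <-]]. apply in_qspan_qcol; auto. }
  apply NNPP. intros Hns. set (N := Nat.div2 m).
  assert (HmE : inlist E m = false) by (apply inlist_false; auto).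
  unfold E in HmE. rewrite (deletion_set_excess SL m) in HmE. fold N in HmE.
  apply Bool.orb_false_iff in HmE. destruct HmE as [HNk HNS]. apply Nat.ltb_ge in HNk.
  assert (Hfr : frame_sub (fun n => negb (inlist SL n || Nat.eqb n (N - k)%nat)) f).
  { apply (frame_sub_of_gram_injective (E ++ [m; mate m])).
    - apply NoDup_pairs_app_mates; auto. apply NoDup_deleted_indices; auto.
    - apply deletion_set_app_mates; auto. apply deletion_set_excess.
    - exact (gram_injective_app_mates rgram rgram_sym rgram_idempotent rgram_i_l rgram_i_i
        E m Hinj (mate_closed_pairs _) Hns). }
  destruct (Hmax _ Hfr) as [l [Hlnd [Hlen Hlin]]].
  assert (Hincl : incl ((N - k)%nat :: SL) l).
  { intros x [<-|Hx]; apply Hlin; [rewrite Nat.eqb_refl; apply Bool.orb_true_r|].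
    apply inlist_In in Hx. rewrite Hx. reflexivity. }
  assert (Hnd2 : NoDup ((N - k)%nat :: SL)).
  { constructor; auto. intros H. apply inlist_In in H. congruence. }
  pose proof (NoDup_incl_length Hnd2 Hincl). simpl in *. lia.
Qed.

Lemma length_pairs_deleted_indices SL :
  length (pairs (deleted_indices k SL)) = (2 * (k + length SL))%nat.
Proof. rewrite length_pairs. unfold deleted_indices. rewrite length_app, length_seq, length_map. lia. Qed.

Lemma sum_compl_norms_of_excess (SL : list nat) (e : nat) : NoDup SL -> length SL = e ->
  frame_sub (fun n => negb (inlist SL n)) f ->
  (forall D : nat -> bool, frame_sub (fun n => negb (D n)) f ->
     exists l : list nat, NoDup l /\ (length l <= e)%nat /\ forall n, D n = true -> In n l) ->
  infinite_sum (fun n => 1 - nrm2 (g n)) (INR k + INR e).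
Proof.
  intros HSnd HSlen HSfr Hmax. set (E := pairs (deleted_indices k SL)).
  assert (HEnd : NoDup E) by (apply NoDup_pairs, NoDup_deleted_indices; auto).
  assert (Hinj := gram_injective_of_frame_sub E _ HEnd (deletion_set_excess SL) HSfr).
  assert (Htr := sum_compl_diag rgram rgram_sym rgram_idempotent E Hinj
    (in_qspan_of_excess SL e HSnd HSlen HSfr Hmax)).
  unfold E in Htr. rewrite length_pairs_deleted_indices, HSlen in Htr.
  apply infinite_sum_pairs in Htr.
  apply (infinite_sum_ext (fun n => / 2 * ((1 - rgram (2 * n) (2 * n)) + (1 - rgram (S (2 * n)) (S (2 * n)))))).
  - intros n. rewrite rgram_diag_even, rgram_diag_odd. field.
  - replace (INR k + INR e) with (/ 2 * INR (2 * (k + e))) by (rewrite mult_INR, plus_INR; simpl; field).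
    apply infinite_sum_scal; auto.
Qed.

End ParsevalGram.

Theorem corollary3p7 (f : nat -> vec) (e : nat) (k : nat) (xs : nat -> vec) :
  is_frame f ->
  optimal_upper_bound f 1 ->
  excess f e ->
  finite_rank_defect f ->
  parseval (prepend k xs f) ->
  infinite_sum (fun n => 1 - nrm2 (f n)) (fsum k (fun n => nrm2 (xs n)) + INR e).
Proof.
  intros _ _ [[SL [HSnd [HSlen HSfr]]] Hmax] _ [g_l2 g_parseval].
  set (g := prepend k xs f) in *.
  assert (g_tail : forall n, g (n + k)%nat = f n) by apply prepend_hi.
  pose proof (sum_compl_norms_of_excess g g_l2 g_parseval f k g_tail SL e HSnd HSlen HSfr Hmax) as Hg.
  apply infinite_sum_tail with (k := k) in Hg.
  replace (fsum k (fun n => nrm2 (xs n)) + INR e) with (INR k + INR e - fsum k (fun n => 1 - nrm2 (g n))).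
  - eapply infinite_sum_ext; [|exact Hg]. intros n. cbv beta. rewrite g_tail. reflexivity.
  - rewrite (fsum_ext k _ (fun n => 1 + - nrm2 (xs n))) by (intros n Hn; unfold g; rewrite prepend_lo by auto; ring).
    rewrite fsum_plus, fsum_one, <- fsum_opp. ring.
Qed.
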